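(* Let $G\le S_n$ be transitive and suppose $G$ contains two permutations $g_1,g_2$ whose i-types are disjoint. Then $G$ is primitive.
   Context: If $(m_1,\dots,m_l)$ is a partition of $m$, then $(km_1,\dots,km_l)$ is an ic-partition of type $(k,m)$. A clustering of a partition is a partition of its multiset of parts into sub-multisets (clusters). A partition of $km$ is an i-partition of type $(k,m)$ if it has a clustering $P_1,\dots,P_r$ and a partition $(k_1,\dots,k_r)$ of $k$ with each $P_i$ an ic-partition of type $(k_i,m)$. The i-type of a permutation $g\in S_n$ is the set of pairs $(k,m)$ with $k,m>1$, $km=n$, such that the cycle partition of $g$ (multiset of its cycle lengths) is an i-partition of type $(k,m)$. *)

From mathcomp Require Import all_boot all_fingroup all_solvable.
Set Implicit Arguments. Unset Strict Implicit. Unset Printing Implicit Defensive.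

(* Partitions are represented as sequences of positive naturals
   (order irrelevant; multisets compared with perm_eq). *)
Definition is_partition (m : nat) (s : seq nat) : Prop :=
  all (fun x => 0 < x) s /\ sumn s = m.

(* Cycle partition of g: multiset of the lengths of its cycles
   (orbits of <[g]>, fixed points included as 1-cycles). *)
Definition cycle_partition (n : nat) (g : {perm 'I_n}) : seq nat :=
  map (fun X : {set 'I_n} => #|X|) (enum (porbits g)).

Definition ic_partition (k m : nat) (P : seq nat) : Prop :=
  exists ms : seq nat, is_partition m ms /\ perm_eq P [seq k * x | x <- ms].

(* P is an i-partition of type (k,m): there is a clustering P_1,...,P_r of
   the multiset P and a partition (k_1,...,k_r) of k with each P_i an
   ic-partition of type (k_i, m).  The list C pairs each k_i with P_i. *)
Definition i_partition (k m : nat) (P : seq nat) : Prop :=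
  exists C : seq (nat * seq nat),
    [/\ perm_eq P (flatten [seq c.2 | c <- C]),
        is_partition k [seq c.1 | c <- C] &
        forall c, c \in C -> ic_partition c.1 m c.2].

Definition in_i_type (n : nat) (g : {perm 'I_n}) (k m : nat) : Prop :=
  [/\ 1 < k, 1 < m, k * m = n & i_partition k m (cycle_partition g)].

Definition i_types_disjoint (n : nat) (g1 g2 : {perm 'I_n}) : Prop :=
  forall k m, ~ (in_i_type g1 k m /\ in_i_type g2 k m).

From mathcomp Require Import all_boot all_fingroup all_solvable.
Set Implicit Arguments. Unset Strict Implicit. Unset Printing Implicit Defensive.

(* If G is imprimitive, fix a nontrivial block system Q of k blocks of size m,
   so that k m = n.  Any g in G permutes the blocks; a <g>-orbit of r blocks is
   covered by cycles of g whose lengths are multiples of r (the stabiliser in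
   <g> of a point fixes its block) and add up to r m.  Grouping the cycles of g
   by the block orbit they cover thus exhibits the cycle partition of g as an
   i-partition of type (k, m), for every g in G, contradicting disjointness. *)

Lemma perm_flatten_fibers (T U : eqType) (f : T -> U) (os : seq U) (s : seq T) :
  uniq os -> {in s, forall x, f x \in os} ->
  perm_eq s (flatten [seq [seq x <- s | f x == o] | o <- os]).
Proof.
elim: os s => [|o os IHos] s /=.
  by case: s => // x s _ /(_ x (mem_head x s)).
case/andP=> o_os Uos fs.
rewrite -(perm_filterC (fun x => f x == o) s) perm_cat2l.
have -> : [seq [seq x <- s | f x == o'] | o' <- os] =
          [seq [seq x <- [seq x <- s | f x != o] | f x == o'] | o' <- os].
  apply/eq_in_map => o' o'os; rewrite -filter_predI; apply/eq_filter => x /=.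
  by case: eqP => // ->; rewrite (memPn o_os).
apply: IHos => // x; rewrite mem_filter => /andP[fxo /fs].
by rewrite inE (negbTE fxo).
Qed.

Lemma ic_partition_dvd k m (s : seq nat) :
  0 < k -> {in s, forall x, 0 < x /\ k %| x} -> sumn s = k * m ->
  ic_partition k m s.
Proof.
move=> k_gt0 sP sum_s; exists [seq x %/ k | x <- s].
have divsK : [seq k * y | y <- [seq x %/ k | x <- s]] = s.
  rewrite -map_comp -[RHS]map_id; apply/eq_in_map => x /sP[_ kx] /=.
  by rewrite mulnC divnK.
rewrite divsK; split=> //; split.
  by apply/allP=> _ /mapP[x /sP[x_gt0 kx] ->]; rewrite divn_gt0 // dvdn_leq.
apply/eqP; rewrite -(eqn_pmul2l k_gt0) -sum_s -{2}divsK.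
by rewrite [X in _ == X]sumnE big_map -big_distrr -sumnE.
Qed.

Lemma pblock_mem_partition (T : finType) (P : {set {set T}}) x :
  partition P [set: T] -> pblock P x \in P.
Proof. by case/and3P=> /eqP coverP _ _; rewrite pblock_mem ?coverP. Qed.

Lemma card_pblock_cond (T : finType) (P : {set {set T}}) (p : pred {set T}) :
  partition P [set: T] ->
  #|[set x | p (pblock P x)]| = \sum_(B in P | p B) #|B|.
Proof.
move=> partP; have /and3P[_ trivP _] := partP.
rewrite -sum1_card (eq_bigl (fun x => (x \in [set: T]) && p (pblock P x)));
  last by move=> x; rewrite !inE.
rewrite (set_partition_big_cond _ partP) [RHS]big_mkcondr.
apply: eq_bigr => B BP.
rewrite (eq_bigl (fun x => (x \in B) && p B)) => [|x]; last first.
  by case: (boolP (x \in B)) => // xB; rewrite (def_pblock trivP BP xB).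
case: (p B); last by rewrite big_pred0 // => x; rewrite andbF.
by rewrite -sum1_card; apply: eq_bigl => x; rewrite andbT.
Qed.

Lemma partition_porbits (T : finType) (g : {perm T}) :
  partition (porbits g) [set: T].
Proof.
have -> : porbits g = orbit 'P <[g]>%g @: [set: T].
  apply/setP => X; apply/imsetP/imsetP => -[x _ ->];
    by exists x; rewrite ?porbitE.
by apply: orbit_partition; apply/actsP => a _ x; rewrite !inE.
Qed.

Section BlockSystems.

Variables (T : finType) (Q : {set {set T}}) (A : {group {perm T}}).
Hypotheses (partQ : partition Q [set: T]) (actsQ : [acts A, on Q | 'P^*]).

Lemma pblock_act a x : a \in A -> pblock Q (a x) = a @: pblock Q x.
Proof.
have /and3P[/eqP coverQ trivQ _] := partQ.
move=> aA; apply: def_pblock trivQ _ _; last first.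
  by apply: imset_f; rewrite mem_pblock coverQ inE.
by rewrite -[_ @: _]/('P^* _ a)%act (acts_act actsQ aA) pblock_mem_partition.
Qed.

Lemma pblock_orbit x : pblock Q @: orbit 'P A x = orbit 'P^* A (pblock Q x).
Proof.
by rewrite /orbit -imset_comp; apply: eq_in_imset => a; apply: pblock_act.
Qed.

Lemma card_orbit_pblock_dvd x :
  #|orbit 'P^* A (pblock Q x)| %| #|orbit 'P A x|.
Proof.
rewrite !card_orbit indexgS //; apply/subsetP => a /setIP[aA /astab1P ax].
rewrite inE aA; apply/astab1P/esym; rewrite -{1}ax; exact: pblock_act.
Qed.

End BlockSystems.

Section CycleClusters.

Variables (T : finType) (Q : {set {set T}}) (m : nat) (g : {perm T}).
Hypotheses (partQ : partition Q [set: T]) (actsQ : [acts <[g]>%g, on Q | 'P^*]).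
Hypothesis cardQ : {in Q, forall X : {set T}, #|X| = m}.

Lemma pblock_porbit x :
  pblock Q @: porbit g x = orbit 'P^* <[g]>%g (pblock Q x).
Proof. by rewrite porbitE pblock_orbit. Qed.

Lemma sum_card_porbits_pblock_orbit B :
  B \in Q ->
  \sum_(c in porbits g | pblock Q @: c == orbit 'P^* <[g]>%g B) #|c|
    = #|orbit 'P^* <[g]>%g B| * m.
Proof.
move=> BQ; have /and3P[_ trivC _] := partition_porbits g.
rewrite -card_pblock_cond ?partition_porbits //.
transitivity #|[set x | pblock Q x \in orbit 'P^* <[g]>%g B]|.
  apply: eq_card => x; rewrite !inE -orbit_eq_mem -pblock_porbit.
  by rewrite (def_pblock trivC _ (porbit_id g x)) //; apply: imset_f.
rewrite card_pblock_cond // -sum_nat_const; apply: eq_big => [C | C].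
  by apply: andb_idl; apply: subsetP; rewrite (acts_sub_orbit _ actsQ).
by case/andP=> /cardQ.
Qed.

Lemma i_partition_porbits :
  i_partition #|Q| m [seq #|c| | c : {set T} <- enum (porbits g)].
Proof.
pose cluster (O : {set {set T}}) :=
  [seq c <- enum (porbits g) | pblock Q @: (c : {set T}) == O].
pose lengths (cs : seq {set T}) := [seq #|c| | c : {set T} <- cs].
pose orbits := enum (orbit 'P^* <[g]>%g @: Q).
pose cluster_type (O : {set {set T}}) := (#|O|, lengths (cluster O)).
exists (map cluster_type orbits); split.
- have -> : flatten [seq C.2 | C <- map cluster_type orbits]
           = lengths (flatten (map cluster orbits)).
    by rewrite /lengths map_flatten -!map_comp.
  apply/perm_map/perm_flatten_fibers; first exact: enum_uniq.
  move=> c; rewrite mem_enum => /imsetP[x _ ->].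
  by rewrite pblock_porbit mem_enum imset_f ?pblock_mem_partition.
- rewrite -map_comp; split.
    apply/allP => _ /mapP[_ /[!mem_enum] /imsetP[B _ ->] ->].
    by apply/card_gt0P; exists B; apply: orbit_refl.
  by rewrite (card_partition (orbit_partition actsQ)) sumnE big_map big_enum.
move=> _ /mapP[_ /[!mem_enum] /imsetP[B BQ ->] ->] /=.
apply: ic_partition_dvd; first by apply/card_gt0P; exists B; apply: orbit_refl.
  move=> l /mapP[c]; rewrite mem_filter mem_enum.
  case/andP=> /eqP<- /imsetP[x _ ->] ->; rewrite pblock_porbit porbitE.
  split; last exact: card_orbit_pblock_dvd.
  by apply/card_gt0P; exists x; apply: orbit_refl.
by rewrite sumnE big_map big_filter big_enum_cond sum_card_porbits_pblock_orbit.
Qed.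

End CycleClusters.

Lemma eq_card_blocks_transitive (T : finType) (G : {group {perm T}})
    (Q : {set {set T}}) :
  [transitive G, on [set: T] | 'P] -> partition Q [set: T] ->
  [acts G, on Q | 'P^*] -> {in Q &, forall X Y : {set T}, #|X| = #|Y|}.
Proof.
move=> trG partQ actsQ X Y XQ YQ; have /and3P[_ trivQ nzQ] := partQ.
have [x Xx] : exists x, x \in X by apply/set0Pn; apply: contraNneq nzQ => <-.
have [y Yy] : exists y, y \in Y by apply/set0Pn; apply: contraNneq nzQ => <-.
have [a aG yE] := atransP2 trG (in_setT x) (in_setT y).
rewrite -(def_pblock trivQ YQ Yy) yE (pblock_act partQ actsQ _ aG).
by rewrite (def_pblock trivQ XQ Xx) card_imset //; apply: perm_inj.
Qed.

Lemma in_i_type_imprimitivity_system n (G : {group {perm 'I_n}}) Q g :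
  [transitive G, on [set: 'I_n] | 'P] ->
  imprimitivity_system G [set: 'I_n] 'P Q -> g \in G ->
  in_i_type g #|Q| (n %/ #|Q|).
Proof.
move=> trG /and3P[partQ actsQ /andP[Q_gt1 Q_lt_n]] gG.
have [X0 X0Q] : exists X0, X0 \in Q by apply/card_gt0P; apply: ltnW.
have cardQ : {in Q, forall X : {set 'I_n}, #|X| = #|X0|}.
  by move=> X XQ; apply: eq_card_blocks_transitive trG partQ actsQ X X0 XQ X0Q.
have nE : n = #|Q| * #|X0|.
  by rewrite -(card_uniform_partition cardQ partQ) cardsT card_ord.
rewrite cardsT card_ord in Q_lt_n.
have -> : n %/ #|Q| = #|X0| by rewrite [X in X %/ _]nE mulKn // ltnW.
split=> //; first by rewrite -(ltn_pmul2l (ltnW Q_gt1)) muln1 -nE.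
apply: i_partition_porbits partQ _ cardQ.
by apply: subset_trans actsQ; rewrite cycle_subG.
Qed.

Unset Implicit Arguments.

Theorem mainTheorem18 (n : nat) (G : {group {perm 'I_n}})
  (g1 g2 : {perm 'I_n}) :
  [transitive G, on [set: 'I_n] | 'P] ->
  g1 \in G -> g2 \in G ->
  i_types_disjoint g1 g2 ->
  [primitive G, on [set: 'I_n] | 'P].
Proof.
move=> trG g1G g2G disjoint_g12; rewrite /primitive trG /=.
apply/existsP => -[Q sysQ]; apply: (disjoint_g12 #|Q| (n %/ #|Q|)).
by split; apply: in_i_type_imprimitivity_system trG sysQ _.
Qed.
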